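(* Let $\lambda$ be a partition of $n$ and $0\le k\le n-1$. Then $$\mathrm{QYT}_{=k+1}(\lambda)=\sum_{m=0}^{k}\binom{n+1}{k-m}(-1)^{k-m}\,\mathrm{SSYT}_{m+1}(\lambda),$$ where both sides denote numbers of tableaux.
   Context: A semistandard Young tableau (SSYT) of shape $\lambda$ is a filling of the Young diagram of $\lambda$ with positive integers weakly increasing along rows and strictly increasing up columns (French convention: rows counted from bottom to top). $\mathrm{SSYT}_{m}(\lambda)$ is the number of SSYT of shape $\lambda$ with all entries at most $m$. A quasi-Yamanouchi tableau (QYT) is an SSYT such that whenever an entry $i\ge2$ appears, some instance of $i$ lies in a strictly higher row than some instance of $i-1$. $\mathrm{QYT}_{=m}(\lambda)$ is the number of QYT of shape $\lambda$ whose largest entry is exactly $m$. *)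

From mathcomp Require Import all_boot all_order all_algebra.
Set Implicit Arguments. Unset Strict Implicit. Unset Printing Implicit Defensive.

Definition is_partition (la : seq nat) : bool :=
  sorted geq la && all (fun x => 0 < x) la.

(* French convention: row i (i = 0 is the bottom row) has la_i cells,
   in columns 0 .. la_i - 1. *)
Definition in_shape (la : seq nat) (i j : nat) : bool := j < nth 0 la i.

(* A filling with entries in {1..m} is encoded as a function on the bounding
   box 'I_(size la) * 'I_(head 0 la) with values in 'I_m.+1 = {0..m}, where
   the value 0 is used exactly on the box cells outside the diagram. *)
Definition filling (la : seq nat) (m : nat) :=
  {ffun 'I_(size la) * 'I_(head 0 la) -> 'I_m.+1}.

Definition entry (la : seq nat) (m : nat) (t : filling la m) (i j : nat) : nat :=
  match insub i, insub j with
  | Some i', Some j' => val (t (i', j'))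
  | _, _ => 0
  end.

Definition is_ssyt (la : seq nat) (m : nat) (t : filling la m) : bool :=
  [forall c : 'I_(size la) * 'I_(head 0 la),
     (val (t c) != 0) == in_shape la c.1 c.2]
  && [forall i : 'I_(size la), forall j : 'I_(head 0 la),
        (in_shape la i j.+1 ==> (entry t i j <= entry t i j.+1))
        && (in_shape la i.+1 j ==> (entry t i j < entry t i.+1 j))].

Definition is_qyt (la : seq nat) (m : nat) (t : filling la m) : bool :=
  is_ssyt t &&
  [forall c : 'I_(size la) * 'I_(head 0 la),
     (2 <= val (t c)) ==>
     [exists c1 : 'I_(size la) * 'I_(head 0 la),
        exists c2 : 'I_(size la) * 'I_(head 0 la),
          [&& val (t c1) == val (t c), val (t c2) == (val (t c)).-1
            & (val c2.1 < val c1.1)%N]]].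

Definition SSYT (m : nat) (la : seq nat) : nat :=
  #|[set t : filling la m | is_ssyt t]|.

Definition QYT_eq (m : nat) (la : seq nat) : nat :=
  #|[set t : filling la m | is_qyt t &&
       [exists c : 'I_(size la) * 'I_(head 0 la), val (t c) == m]]|.

(* Grouping SSYT by the set of values they use gives SSYT_M = sum_r C(M, r) P_r, where P_r
   counts the packed tableaux, whose values are exactly 1..r.  Call u in [1, r) a non-descent
   of a packed tableau if no u+1 lies strictly above a u: the QYT with largest entry r are the
   packed tableaux without non-descents.  Merging the values u, u+1 at a non-descent is undone
   by splitting at the leftmost u+1, and a packed tableau on r values has n - r cells that are
   not the leftmost cell of their value, so double counting gives
   (d+1) P_(r+1, d+1) = (n-r) P_(r, d) for tableaux with d non-descents, hence
   P_r = sum_j C(n-j, n-r) QYT_(=j).  By Vandermonde, SSYT_M = sum_j C(M+n-j, n) QYT_(=j), and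
   this triangular system is inverted by the alternating sum of the statement, because
   sum_i (-1)^i C(n+1, i) C(n+s-i, n) = [s = 0]. *)

From mathcomp Require Import all_boot all_order all_algebra.
From mathcomp Require Import zify.
Set Implicit Arguments. Unset Strict Implicit. Unset Printing Implicit Defensive.

Ltac ifs_lia := repeat (match goal with
 | |- context [if ?b then _ else _] =>
    lazymatch b with context [if _ then _ else _] => fail | _ => case: (boolP b) => ? end
 end); try lia.

Lemma card_in_bij (X Y : finType) (A : {set X}) (B : {set Y}) (f : X -> Y) (g : Y -> X) :
  {in A, forall a, f a \in B} -> {in B, forall b, g b \in A} ->
  {in A, cancel f g} -> {in B, cancel g f} -> #|A| = #|B|.
Proof.
move=> fAB gBA fK gK.
rewrite -(@card_in_imset _ _ f A); last exact: can_in_inj fK.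
apply: eq_card => b; apply/imsetP/idP => [[a aA ->]|bB]; first exact: fAB.
by exists (g b); [apply: gBA | rewrite gK].
Qed.

Lemma card_pairs_const (X Y : finType) (P : pred X) (Q : X -> pred Y) a :
  (forall x, P x -> #|[set y | Q x y]| = a) ->
  #|[set p : X * Y | P p.1 && Q p.1 p.2]| = a * #|[set x | P x]|.
Proof.
move=> HQ; rewrite -sum1_card big_set /= -(pair_big_dep P Q (fun _ _ => 1)) /=.
rewrite (eq_bigr (fun _ => a)) => [|x Px]; last by rewrite -(HQ x Px) -sum1_card big_set.
by rewrite -big_set sum_nat_const mulnC.
Qed.

Lemma card_fibers (X : finType) (P : pred X) (f : X -> nat) K :
  (forall x, P x -> f x < K) ->
  #|[set x | P x]| = \sum_(d < K) #|[set x | P x && (f x == d)]|.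
Proof.
move=> fK.
have fiberE (d : 'I_K) : #|[set x | P x && (f x == d)]| = \sum_(x | P x) ((f x == d) : nat).
  by rewrite -sum1_card big_set /= big_mkcondr /=; apply: eq_bigr => x _; case: (f x == d).
rewrite (eq_bigr _ (fun d _ => fiberE d)) exchange_big /= -sum1_card big_set /=.
apply: eq_bigr => x Px; rewrite (bigD1 (Ordinal (fK x Px))) //= eqxx big1 // => d.
move=> nd; case: eqP => // fx; case/eqP: nd; exact: val_inj.
Qed.

Lemma card_pos_ord n : #|[set v : 'I_n.+1 | 0 < v]| = n.
Proof.
have -> : [set v : 'I_n.+1 | 0 < v] = [set~ ord0] by apply/setP => v; rewrite !inE lt0n.
by rewrite cardsC1 card_ord.
Qed.

Lemma card_lift n (P : pred 'I_n.+1) j : P j ->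
  #|[set u | P u]| = #|[set u : 'I_n | P (lift j u)]|.+1.
Proof. by move=> Pj; rewrite -!sum1_card !big_set /= (bigD1_ord j) //= add1n. Qed.

Lemma sum_ord_lt h x : \sum_(j < h) (j < x : nat) = minn x h.
Proof.
elim: h => [|h IH]; first by rewrite big_ord0 minn0.
by rewrite big_ord_recr /= IH; case: (ltnP h x) => hx /=; lia.
Qed.

Lemma sum_ord_zero_tail (F : nat -> nat) a b : a <= b -> (forall j, a <= j < b -> F j = 0) ->
  \sum_(j < b) F j = \sum_(j < a) F j.
Proof.
move=> ab F0; rewrite -!(big_mkord xpredT) (big_cat_nat (leq0n a) ab) /=.
by rewrite [X in _ + X]big_nat_cond [X in _ + X]big1 ?addn0 // => j /andP [/F0].
Qed.

Definition cell (la : seq nat) := ('I_(size la) * 'I_(head 0 la))%type.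

Section Tableaux.
Variable la : seq nat.
Hypothesis Hla : is_partition la.
Local Notation cell := (cell la).
Implicit Types (M r : nat) (a b c x y : cell).

Definition in_diagram c := in_shape la c.1 c.2.

Lemma partition_nth_le i i' : i <= i' -> nth 0 la i' <= nth 0 la i.
Proof.
move=> le; case: (ltnP i' (size la)) => hi'; last by rewrite nth_default.
case/andP: Hla => sorted_la _.
have geq_trans : transitive geq by move=> ? ? ? h1 h2; apply: leq_trans h2 h1.
apply: (sorted_leq_nth geq_trans (@leqnn) 0 sorted_la) => //.
by rewrite inE; apply: leq_ltn_trans hi'.
Qed.

Lemma in_shape_le i j i' j' : in_shape la i j -> i' <= i -> j' <= j -> in_shape la i' j'.
Proof.
rewrite /in_shape => h hi hj; apply: leq_ltn_trans hj _.
exact: leq_trans h (partition_nth_le hi).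
Qed.

Lemma in_shape_box i j : in_shape la i j -> (i < size la) && (j < head 0 la).
Proof.
rewrite /in_shape => h; apply/andP; split.
  by case: (ltnP i (size la)) => // hi; rewrite nth_default in h.
by rewrite -nth0; apply: leq_trans h (partition_nth_le (leq0n i)).
Qed.

Lemma card_diagram : #|[set c | in_diagram c]| = sumn la.
Proof.
rewrite -sum1_card big_mkcond /=.
have -> : \sum_c (if c \in [set c | in_diagram c] then 1 else 0) =
    \sum_(i < size la) \sum_(j < head 0 la) (j < nth 0 la i : nat).
  rewrite pair_big; apply: eq_big => // [[i j]] _.
  by rewrite inE /in_diagram /in_shape /=; case: (j < _).
rewrite sumnE (big_nth 0) big_mkord; apply: eq_bigr => i _.
by rewrite sum_ord_lt; apply/minn_idPl; rewrite -nth0; exact: partition_nth_le.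
Qed.

Lemma exists_in_diagram : la != [::] -> exists c, in_diagram c.
Proof.
move=> la_ne; have size_gt0 : 0 < size la by rewrite lt0n size_eq0.
case/andP: Hla => _ pos_la.
have head_gt0 : 0 < head 0 la by case: la la_ne pos_la => // a l _ /= /andP [].
by exists (Ordinal size_gt0, Ordinal head_gt0); rewrite /in_diagram /in_shape /= nth0.
Qed.

Definition ent M (t : filling la M) c : nat := t c.

Lemma entry_cell M (t : filling la M) c : entry t c.1 c.2 = ent t c.
Proof. by case: c => i j; rewrite /entry /= !valK. Qed.

Lemma ent_le M (t : filling la M) c : ent t c <= M.
Proof. by rewrite -ltnS; apply: ltn_ord. Qed.

(* [inord] sends values above [M] to the junk value 0, hence the hypothesis of [ent_fill]. *)
Definition fill M (f : cell -> nat) : filling la M := [ffun c => inord (f c)].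

Lemma ent_fill M f c : f c <= M -> ent (fill M f) c = f c.
Proof. by move=> h; rewrite /ent /fill ffunE; apply: inordK. Qed.

Definition diagram_support (f : cell -> nat) := forall c, (f c != 0) = in_diagram c.

Definition ssyt_monotone (f : cell -> nat) :=
  forall a b, in_diagram b -> a.1 <= b.1 -> a.2 <= b.2 -> (f a <= f b) /\ (a.1 < b.1 -> f a < f b).

Lemma is_ssyt_row M (t : filling la M) i j j' :
  is_ssyt t -> in_shape la i j' -> j <= j' -> entry t i j <= entry t i j'.
Proof.
case/andP => _ /forallP Hloc hj' le.
have := @homo_leq_in _ [pred k | in_shape la i k] (entry t i) leq leqnn (@leq_trans).
apply=> //; last exact: in_shape_le hj' (leqnn i) le.
- by move=> k1 k2 _ hk2 k /andP [_ lt]; apply: in_shape_le hk2 (leqnn i) (ltnW lt).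
- move=> k _ hk; case/andP: (in_shape_box hk) => hi hk1.
  by have /forallP/(_ (Ordinal (ltnW hk1)))/andP [/implyP + _] := Hloc (Ordinal hi); apply.
Qed.

Lemma is_ssyt_col M (t : filling la M) i i' j :
  is_ssyt t -> in_shape la i' j -> i < i' -> entry t i j < entry t i' j.
Proof.
case/andP => _ /forallP Hloc hi' lt.
have := @homo_ltn_in _ [pred k | in_shape la k j] (entry t ^~ j) (fun m n => m < n) (@ltn_trans).
apply=> //; last exact: in_shape_le hi' (ltnW lt) (leqnn j).
- by move=> k1 k2 _ hk2 k /andP [_ lt2]; apply: in_shape_le hk2 (ltnW lt2) (leqnn j).
- move=> k _ hk; case/andP: (in_shape_box hk) => hk1 hj.
  by have /forallP/(_ (Ordinal hj))/andP [_ /implyP] := Hloc (Ordinal (ltnW hk1)); apply.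
Qed.

Lemma is_ssytP M (t : filling la M) :
  is_ssyt t <-> diagram_support (ent t) /\ ssyt_monotone (ent t).
Proof.
split=> [Ht | [Hs Hm]].
  case/andP: (Ht) => /forallP Hs _; split=> [c | [i j] [i' j'] /= hb hi hj].
    by have /eqP := Hs c.
  rewrite -!entry_cell /=.
  have row := is_ssyt_row Ht hb hj.
  have col : i < i' -> entry t i j < entry t i' j.
    by move=> lt; apply: is_ssyt_col Ht _ lt; apply: in_shape_le hb (leqnn _) hj.
  split=> [|/col lt]; last exact: leq_trans lt row.
  case: ltngtP hi => [/col lt _ | // | -> _]; [exact: leq_trans (ltnW lt) row | exact: row].
apply/andP; split; first by apply/forallP => c; rewrite Hs.
apply/forallP => i; apply/forallP => j; apply/andP; split; apply/implyP => h.
  case/andP: (in_shape_box h) => _ hj1.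
  by have [+ _] := Hm (i, j) (i, Ordinal hj1) h (leqnn _) (leqnSn _); rewrite -!entry_cell.
case/andP: (in_shape_box h) => hi1 _.
by have [_] := Hm (i, j) (Ordinal hi1, j) h (leqnSn _) (leqnn _); rewrite -!entry_cell; apply.
Qed.

Definition descent M (t : filling la M) (u : nat) : bool :=
  [exists a, exists b, [&& ent t a == u, ent t b == u.+1 & a.1 < b.1]].

Definition occurs M (t : filling la M) (v : nat) := [exists c, ent t c == v].

Definition packed M (t : filling la M) :=
  is_ssyt t && [forall v : 'I_M.+1, (0 < v) ==> occurs t v].

Definition nondescents M (t : filling la M) :=
  #|[set u : 'I_M | (0 < u) && ~~ descent t u]|.

Definition nvalues M (t : filling la M) := #|[set v : 'I_M.+1 | (0 < v) && occurs t v]|.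

Definition not_leftmost M (t : filling la M) c :=
  [exists y, (ent t y == ent t c) && (y.2 < c.2)].

(* [c0] is a junk default, returned only when [w] does not occur. *)
Definition leftmost M (t : filling la M) (c0 : cell) (w : nat) : cell :=
  odflt c0 [pick c | (ent t c == w) && [forall c', (ent t c' == w) ==> (c.2 <= c'.2)]].

Lemma leftmostP M (t : filling la M) c0 w : occurs t w ->
  ent t (leftmost t c0 w) = w /\ forall c, ent t c = w -> (leftmost t c0 w).2 <= c.2.
Proof.
rewrite /leftmost => /existsP [c1 /eqP h1].
case: pickP => [c /andP [/eqP -> /forallP Hmin] | none] /=.
  by split => // c' e; have := Hmin c'; rewrite e eqxx.
exfalso.
case: (@arg_minnP _ c1 (fun c => ent t c == w) (fun c => val c.2)); first by rewrite h1.
move=> c /eqP Pc Hmin; have := none c; rewrite Pc eqxx /=.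
by move/negP; apply; apply/forallP => c'; apply/implyP; exact: Hmin.
Qed.

Section SsytFacts.
Variables (M : nat) (t : filling la M).
Hypothesis Ht : is_ssyt t.

Lemma ssyt_support : diagram_support (ent t).
Proof. by case: (is_ssytP t) => /(_ Ht) []. Qed.

Lemma ssyt_mono : ssyt_monotone (ent t).
Proof. by case: (is_ssytP t) => /(_ Ht) []. Qed.

Lemma in_diagram_ent c : ent t c != 0 -> in_diagram c.
Proof. by rewrite ssyt_support. Qed.

Lemma ent_gt0 c : in_diagram c -> 0 < ent t c.
Proof. by rewrite lt0n ssyt_support. Qed.

Lemma same_ent_col_inj a b : ent t a = ent t b -> ent t a != 0 -> a.2 = b.2 :> nat -> a = b.
Proof.
move=> e nz e2.
have ia := in_diagram_ent nz; have ib : in_diagram b by apply: in_diagram_ent; rewrite -e.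
case: (ltngtP a.1 b.1) => h.
- by have [_ /(_ h)] := ssyt_mono ib (ltnW h) (eq_leq e2); rewrite e ltnn.
- by have [_ /(_ h)] := ssyt_mono ia (ltnW h) (eq_leq (esym e2)); rewrite e ltnn.
- by case: a b {e nz ia ib} e2 h => [a1 a2] [b1 b2] /= e2 e1; congr pair; apply: val_inj.
Qed.

Lemma same_ent_row_le a b : ent t a = ent t b -> ent t a != 0 -> a.2 < b.2 -> b.1 <= a.1.
Proof.
move=> e nz lt; rewrite leqNgt; apply/negP => h.
have ib : in_diagram b by apply: in_diagram_ent; rewrite -e.
by have [_ /(_ h)] := ssyt_mono ib (ltnW h) (ltnW lt); rewrite e ltnn.
Qed.

Lemma nondescent_cells i a b : 0 < i -> ~~ descent t i -> ent t a = i -> ent t b = i.+1 ->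
  b.1 <= a.1 /\ a.2 < b.2.
Proof.
move=> i0 nd ea eb.
have ba : b.1 <= a.1.
  rewrite leqNgt; apply: contra nd => lt.
  by apply/existsP; exists a; apply/existsP; exists b; rewrite ea eb !eqxx lt.
split=> //; rewrite ltnNge; apply/negP => h2.
have ia : in_diagram a by apply: in_diagram_ent; rewrite ea -lt0n.
by have [+ _] := ssyt_mono ia ba h2; rewrite ea eb ltnn.
Qed.

Lemma leftmost_uniq c0 w x : ent t x = w -> w != 0 -> (forall c, ent t c = w -> x.2 <= c.2) ->
  leftmost t c0 w = x.
Proof.
move=> ex nz Hmin.
have occ : occurs t w by apply/existsP; exists x; rewrite ex.
have [el Hl] := leftmostP c0 occ.
apply: same_ent_col_inj; rewrite ?el ?ex //.
by apply/eqP; rewrite eqn_leq Hl // Hmin.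
Qed.

End SsytFacts.

Lemma packed_ssyt M (t : filling la M) : packed t -> is_ssyt t.
Proof. by case/andP. Qed.

Lemma packed_occurs M (t : filling la M) w : packed t -> 0 < w -> w <= M -> occurs t w.
Proof.
case/andP => _ /forallP Hocc w0 wM.
by have := Hocc (inord w); rewrite inordK ?ltnS // w0.
Qed.

Lemma eq_descent M M' (T : filling la M) (t : filling la M') u u' :
  (forall c, (ent T c == u) = (ent t c == u')) ->
  (forall c, (ent T c == u.+1) = (ent t c == u'.+1)) -> descent T u = descent t u'.
Proof.
move=> Hu HuS; apply: eq_existsb => a; apply: eq_existsb => b.
by rewrite Hu HuS.
Qed.

Section Split.
Variables (r : nat) (t : filling la r) (x : cell).
Local Notation v := (ent t x).

Definition split_fun c : nat :=
  if v < ent t c then (ent t c).+1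
  else if (ent t c == v) && (x.2 <= c.2) then v.+1 else ent t c.

Definition split_tab : filling la r.+1 := fill r.+1 split_fun.
Local Notation T := split_tab.

Lemma ent_split_tab c : ent T c = split_fun c.
Proof.
rewrite /split_tab ent_fill // /split_fun.
by have := ent_le t c; have := ent_le t x; ifs_lia.
Qed.

Lemma split_tab_eq_lt w c : w < v -> (ent T c == w) = (ent t c == w).
Proof. by rewrite ent_split_tab /split_fun; ifs_lia. Qed.

Lemma split_tab_eq_val c : (ent T c == v) = (ent t c == v) && (c.2 < x.2).
Proof. by rewrite ent_split_tab /split_fun; ifs_lia. Qed.

Lemma split_tab_eq_succ c : (ent T c == v.+1) = (ent t c == v) && (x.2 <= c.2).
Proof. by rewrite ent_split_tab /split_fun; ifs_lia. Qed.

Lemma split_tab_eq_gt w c : v.+1 < w -> (ent T c == w) = (ent t c == w.-1).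
Proof. by rewrite ent_split_tab /split_fun; ifs_lia. Qed.

Hypotheses (Ht : packed t) (Hx : in_diagram x) (Hnl : not_leftmost t x).

Let t_ssyt : is_ssyt t := packed_ssyt Ht.
Let v_gt0 : 0 < v := ent_gt0 t_ssyt Hx.

Let left_of_x : exists2 y, ent t y = v & y.2 < x.2.
Proof. by case/existsP: Hnl => y /andP [/eqP e lt]; exists y. Qed.

Lemma split_ssyt : is_ssyt T.
Proof.
apply/is_ssytP; split=> [c | a b ib h1 h2].
  by rewrite ent_split_tab -(ssyt_support t_ssyt c) /split_fun; ifs_lia.
have [m1 m2] := ssyt_mono t_ssyt ib h1 h2.
by rewrite !ent_split_tab /split_fun; split; [ifs_lia | move=> /m2; ifs_lia].
Qed.

Lemma split_packed : packed T.
Proof.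
apply/andP; split; first exact: split_ssyt.
apply/forallP => w; apply/implyP => w0; have := ltn_ord w; rewrite ltnS => wle.
have vr := ent_le t x.
case: (ltngtP w v) => hw.
- have /existsP [c /eqP e] : occurs t w by apply: packed_occurs => //; lia.
  by apply/existsP; exists c; rewrite split_tab_eq_lt // e.
- case: (ltngtP w v.+1) => hw2; first lia.
    have /existsP [c /eqP e] : occurs t w.-1 by apply: packed_occurs => //; lia.
    by apply/existsP; exists c; rewrite split_tab_eq_gt // e.
  by apply/existsP; exists x; rewrite hw2 split_tab_eq_succ eqxx leqnn.
- have [y ey lt] := left_of_x.
  by apply/existsP; exists y; rewrite hw split_tab_eq_val ey eqxx lt.
Qed.

Lemma split_nondescent : ~~ descent T v.
Proof.
apply/negP; case/existsP => a /existsP [b /and3P [ea eb lt]].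
move: ea eb; rewrite split_tab_eq_val split_tab_eq_succ.
case/andP => /eqP ea la2 /andP [/eqP eb lb2].
have := same_ent_row_le t_ssyt (etrans ea (esym eb)) _ (leq_trans la2 lb2).
by rewrite ea -lt0n v_gt0 leqNgt lt => /(_ isT).
Qed.

Lemma descent_split u : 0 < u -> u < r -> u != v -> descent T (bump v u) = descent t u.
Proof.
move=> u0 ur uv; rewrite /bump.
case: (ltngtP u.+1 v) => hu.
- rewrite leqNgt (ltnW hu) add0n; apply: eq_descent => c; apply: split_tab_eq_lt; lia.
- rewrite (_ : v <= u = true) ?add1n; last lia.
  by apply: eq_descent => c; rewrite split_tab_eq_gt //; lia.
- rewrite (_ : v <= u = false) ?add0n; last lia.
  apply/idP/idP => /existsP [a /existsP [b /and3P [ea eb lt]]].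
    rewrite split_tab_eq_lt in ea; last lia.
    rewrite hu split_tab_eq_val in eb; case/andP: eb => eb _.
    by apply/existsP; exists a; apply/existsP; exists b; rewrite ea hu eb lt.
  case: (ltnP b.2 x.2) => hb.
    apply/existsP; exists a; apply/existsP; exists b.
    by rewrite split_tab_eq_lt ?ea; [rewrite hu split_tab_eq_val hb -hu eb lt | lia].
  have [y ey ly] := left_of_x.
  have := same_ent_row_le t_ssyt (_ : ent t y = ent t b) _ (leq_trans ly hb).
  rewrite ey -lt0n v_gt0 -hu (eqP eb) => /(_ erefl isT) yb.
  apply/existsP; exists a; apply/existsP; exists y.
  rewrite split_tab_eq_lt ?ea; last lia.
  by rewrite hu split_tab_eq_val ey eqxx ly /=; apply: leq_trans lt yb.
Qed.

Lemma descent_split_succ : descent T v.+1 = descent t v.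
Proof.
apply/idP/idP => /existsP [a /existsP [b /and3P [ea eb lt]]].
  rewrite split_tab_eq_succ in ea; rewrite split_tab_eq_gt // in eb.
  case/andP: ea => ea _.
  by apply/existsP; exists a; apply/existsP; exists b; rewrite ea eb lt.
case: (leqP x.2 a.2) => ha.
  apply/existsP; exists a; apply/existsP; exists b.
  by rewrite split_tab_eq_succ ea ha split_tab_eq_gt // eb lt.
have := same_ent_row_le t_ssyt (_ : ent t a = ent t x) _ ha.
rewrite (eqP ea) -lt0n v_gt0 => /(_ erefl isT) xa.
apply/existsP; exists x; apply/existsP; exists b.
by rewrite split_tab_eq_succ eqxx leqnn split_tab_eq_gt // eb /=; apply: leq_ltn_trans xa lt.
Qed.

Lemma nondescents_split : nondescents T = (nondescents t).+1.
Proof.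
rewrite /nondescents (@card_lift r (fun u : 'I_r.+1 => (0 < u) && ~~ descent T u) (t x));
  last first.
  by rewrite /= v_gt0 split_nondescent.
congr _.+1; apply: eq_card => u; rewrite !inE.
have -> : (lift (t x) u : nat) = bump v u by [].
have -> : (0 < bump v u) = (0 < u) by rewrite /bump; lia.
case: (posnP u) => [-> // | u0] /=.
case: (eqVneq (u : nat) v) => [-> | ne].
  by rewrite /bump leqnn add1n descent_split_succ.
by rewrite descent_split // ltn_ord.
Qed.

Lemma leftmost_split c0 : leftmost T c0 v.+1 = x.
Proof.
apply: (leftmost_uniq split_ssyt) => //; first by apply/eqP; rewrite split_tab_eq_succ eqxx leqnn.
by move=> c /eqP; rewrite split_tab_eq_succ => /andP [].
Qed.

End Split.

Definition merge_fun r (T : filling la r.+1) (i : nat) c : nat :=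
  if i < ent T c then (ent T c).-1 else ent T c.

Definition merge_tab r (T : filling la r.+1) i : filling la r := fill r (merge_fun T i).

Lemma ent_merge_tab r (T : filling la r.+1) i c : i <= r -> ent (merge_tab T i) c = merge_fun T i c.
Proof. by move=> ir; rewrite /merge_tab ent_fill // /merge_fun; have := ent_le T c; ifs_lia. Qed.

Lemma merge_split r (t : filling la r) x : merge_tab (split_tab t x) (ent t x) = t.
Proof.
apply/ffunP => c; apply/val_inj.
change (ent (merge_tab (split_tab t x) (ent t x)) c = ent t c).
by rewrite ent_merge_tab ?ent_le // /merge_fun ent_split_tab /split_fun; ifs_lia.
Qed.

Section Merge.
Variables (r : nat) (T : filling la r.+1) (i : nat).
Hypotheses (HT : packed T) (i_gt0 : 0 < i) (i_le : i <= r) (Hnd : ~~ descent T i).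
Local Notation t := (merge_tab T i).

Let T_ssyt : is_ssyt T := packed_ssyt HT.

Variable c0 : cell.
Local Notation x := (leftmost T c0 i.+1).

Let xP : ent T x = i.+1 /\ forall c, ent T c = i.+1 -> x.2 <= c.2.
Proof. by apply: leftmostP; apply: packed_occurs. Qed.

Lemma merge_ssyt : is_ssyt t.
Proof.
apply/is_ssytP; split=> [c | a b ib h1 h2].
  by rewrite ent_merge_tab // -(ssyt_support T_ssyt c) /merge_fun; ifs_lia.
have [m1 m2] := ssyt_mono T_ssyt ib h1 h2.
rewrite !ent_merge_tab // /merge_fun; split=> [|lt]; first by ifs_lia.
have {}m2 := m2 lt.
case: (eqVneq (ent T a) i) => ea; last by ifs_lia.
case: (eqVneq (ent T b) i.+1) => eb; last by ifs_lia.
by case/negP: Hnd; apply/existsP; exists a; apply/existsP; exists b; rewrite ea eb !eqxx lt.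
Qed.

Lemma merge_packed : packed t.
Proof.
apply/andP; split; first exact: merge_ssyt.
apply/forallP => w; apply/implyP => w0; have := ltn_ord w; rewrite ltnS => wr.
case: (ltnP w i) => hw.
  have /existsP [c /eqP e] : occurs T w by apply: packed_occurs => //; lia.
  by apply/existsP; exists c; rewrite ent_merge_tab // /merge_fun e; ifs_lia.
have /existsP [c /eqP e] : occurs T w.+1 by apply: packed_occurs => //; lia.
by apply/existsP; exists c; rewrite ent_merge_tab // /merge_fun e; ifs_lia.
Qed.

Lemma leftmost_in_diagram : in_diagram x.
Proof. by apply: (in_diagram_ent T_ssyt); case: xP => ->. Qed.

Lemma ent_merge_leftmost : ent t x = i.
Proof. by rewrite ent_merge_tab // /merge_fun; case: xP => ->; ifs_lia. Qed.

Lemma leftmost_not_leftmost : not_leftmost t x.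
Proof.
have /existsP [y /eqP ey] : occurs T i by apply: packed_occurs => //; lia.
have [_ lt] := nondescent_cells T_ssyt i_gt0 Hnd ey (proj1 xP).
apply/existsP; exists y; rewrite ent_merge_leftmost lt andbT ent_merge_tab // /merge_fun ey.
by ifs_lia.
Qed.

Lemma split_merge : split_tab t x = T.
Proof.
apply/ffunP => c; apply/val_inj.
change (ent (split_tab t x) c = ent T c).
rewrite ent_split_tab /split_fun ent_merge_leftmost ent_merge_tab // /merge_fun.
have [ex Hmin] := xP.
case: (ltngtP (ent T c) i.+1) => hc; [|by ifs_lia|by have := Hmin c hc; ifs_lia].
case: (eqVneq (ent T c) i) => ec; last by ifs_lia.
by have [_ lt] := nondescent_cells T_ssyt i_gt0 Hnd ec ex; ifs_lia.
Qed.

End Merge.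

Definition shift_fun M (t : filling la M) (w : nat) c : nat :=
  if w <= ent t c then (ent t c).+1 else ent t c.

Definition shift_tab M (t : filling la M) w : filling la M.+1 := fill M.+1 (shift_fun t w).

Lemma ent_shift_tab M (t : filling la M) w c : ent (shift_tab t w) c = shift_fun t w c.
Proof. by rewrite /shift_tab ent_fill // /shift_fun; have := ent_le t c; ifs_lia. Qed.

Lemma ent_neq_unused M (T : filling la M) w c : ~~ occurs T w -> ent T c != w.
Proof. by apply: contraNneq => e; apply/existsP; exists c; rewrite e. Qed.

Lemma ent_merge_tab_unused M (T : filling la M.+1) w c : ~~ occurs T w -> w <= M.+1 ->
  ent (merge_tab T w) c = merge_fun T w c.
Proof.
move=> /(ent_neq_unused c) ne wM; rewrite /merge_tab ent_fill // /merge_fun.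
by have := ent_le T c; ifs_lia.
Qed.

Section Shift.
Variables (M : nat) (t : filling la M) (w : nat).
Hypotheses (Ht : is_ssyt t) (w_gt0 : 0 < w).

Lemma shift_ssyt : is_ssyt (shift_tab t w).
Proof.
apply/is_ssytP; split=> [c | a b ib h1 h2].
  by rewrite ent_shift_tab -(ssyt_support Ht c) /shift_fun; ifs_lia.
have [m1 m2] := ssyt_mono Ht ib h1 h2.
by rewrite !ent_shift_tab /shift_fun; split; [ifs_lia | move=> /m2; ifs_lia].
Qed.

Lemma shift_unused : ~~ occurs (shift_tab t w) w.
Proof. by apply/negP => /existsP [c]; rewrite ent_shift_tab /shift_fun; ifs_lia. Qed.

Lemma merge_shift : w <= M.+1 -> merge_tab (shift_tab t w) w = t.
Proof.
move=> wM; apply/ffunP => c; apply/val_inj.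
change (ent (merge_tab (shift_tab t w) w) c = ent t c).
by rewrite ent_merge_tab_unused ?shift_unused // /merge_fun ent_shift_tab /shift_fun; ifs_lia.
Qed.

Lemma nvalues_shift : nvalues (shift_tab t w) = nvalues t.
Proof.
pose f (v : 'I_M.+1) : 'I_M.+2 := inord (if w <= v then v.+1 else v).
have fE (v : 'I_M.+1) : (f v : nat) = if w <= v then v.+1 else v.
  by rewrite /f inordK //; have := ltn_ord v; ifs_lia.
have f_inj : injective f.
  by move=> u v /(congr1 val) /=; rewrite !fE => e; apply: val_inj => /=; move: e; ifs_lia.
rewrite /nvalues -(card_imset _ f_inj); apply: eq_card => y.
rewrite inE; apply/andP/imsetP => [[y0 /existsP [c /eqP e]] | [v]].
  exists (t c); last by apply/val_inj; rewrite /= fE -e ent_shift_tab.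
  rewrite inE; apply/andP; split; last by apply/existsP; exists c.
  by change (0 < ent t c); move: e y0; rewrite ent_shift_tab /shift_fun; ifs_lia.
rewrite inE => /andP [v0 /existsP [c /eqP e]] ->.
split; first by rewrite fE; ifs_lia.
by apply/existsP; exists c; rewrite ent_shift_tab fE /shift_fun e.
Qed.

End Shift.

Section Unshift.
Variables (M : nat) (T : filling la M.+1) (w : nat).
Hypotheses (HT : is_ssyt T) (w_gt0 : 0 < w) (w_le : w <= M.+1) (Hu : ~~ occurs T w).

Lemma unshift_ssyt : is_ssyt (merge_tab T w).
Proof.
apply/is_ssytP; split=> [c | a b ib h1 h2].
  by rewrite ent_merge_tab_unused // -(ssyt_support HT c) /merge_fun; ifs_lia.
have [m1 m2] := ssyt_mono HT ib h1 h2.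
have na := ent_neq_unused a Hu; have nb := ent_neq_unused b Hu.
by rewrite !ent_merge_tab_unused // /merge_fun; split; [ifs_lia | move=> /m2; ifs_lia].
Qed.

Lemma shift_unshift : shift_tab (merge_tab T w) w = T.
Proof.
apply/ffunP => c; apply/val_inj.
change (ent (shift_tab (merge_tab T w) w) c = ent T c).
have := ent_neq_unused c Hu.
by rewrite ent_shift_tab /shift_fun ent_merge_tab_unused // /merge_fun; ifs_lia.
Qed.

Lemma nvalues_unshift : nvalues (merge_tab T w) = nvalues T.
Proof. by rewrite -{2}shift_unshift nvalues_shift // unshift_ssyt. Qed.

End Unshift.

Definition count_nvalues M r := #|[set t : filling la M | is_ssyt t && (nvalues t == r)]|.

Definition count_packed r := #|[set t : filling la r | packed t]|.

Definition count_packed_nondesc r d :=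
  #|[set t : filling la r | packed t && (nondescents t == d)]|.

Lemma nvalues_le M (t : filling la M) : nvalues t <= M.
Proof.
rewrite -[X in _ <= X]card_pos_ord; apply: subset_leq_card.
by apply/subsetP => v; rewrite !inE => /andP [].
Qed.

Lemma card_unused M (T : filling la M) :
  #|[set w : 'I_M.+1 | (0 < w) && ~~ occurs T w]| = M - nvalues T.
Proof.
have := cardsID [set w : 'I_M.+1 | occurs T w] [set w : 'I_M.+1 | 0 < w].
have -> : [set w : 'I_M.+1 | 0 < w] :&: [set w : 'I_M.+1 | occurs T w] =
    [set v : 'I_M.+1 | (0 < v) && occurs T v].
  by apply/setP => w; rewrite !inE.
have -> : [set w : 'I_M.+1 | 0 < w] :\: [set w : 'I_M.+1 | occurs T w] =
    [set w : 'I_M.+1 | (0 < w) && ~~ occurs T w].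
  by apply/setP => w; rewrite !inE andbC.
by rewrite card_pos_ord /nvalues; lia.
Qed.

(* Both sides count pairs (tableau, value w > 0): squeezing out an unused value w by
   [merge_tab] is inverted by making room for it again with [shift_tab]. *)
Lemma count_nvalues_succ M r : (M.+1 - r) * count_nvalues M.+1 r = M.+1 * count_nvalues M r.
Proof.
rewrite /count_nvalues.
rewrite -(@card_pairs_const _ _ (fun T : filling la M.+1 => is_ssyt T && (nvalues T == r))
           (fun T (w : 'I_M.+2) => (0 < w) && ~~ occurs T w)); last first.
  by move=> T /andP [_ /eqP <-]; apply: card_unused.
rewrite -(@card_pairs_const _ _ (fun t : filling la M => is_ssyt t && (nvalues t == r))
           (fun _ (w : 'I_M.+2) => 0 < w)); last by move=> t _; apply: card_pos_ord.
apply: (@card_in_bij _ _ _ _ (fun p : filling la M.+1 * 'I_M.+2 => (merge_tab p.1 p.2, p.2))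
                             (fun p : filling la M * 'I_M.+2 => (shift_tab p.1 p.2, p.2))).
- move=> [T w]; rewrite !inE /= => /andP [/andP [HT /eqP <-] /andP [w0 Hu]].
  by rewrite w0 unshift_ssyt ?nvalues_unshift ?eqxx // -ltnS.
- move=> [t w]; rewrite !inE /= => /andP [/andP [Ht /eqP <-] w0].
  by rewrite w0 shift_ssyt //= nvalues_shift // eqxx shift_unused.
- move=> [T w]; rewrite !inE /= => /andP [/andP [HT _] /andP [w0 Hu]].
  by rewrite shift_unshift // -ltnS.
- move=> [t w]; rewrite !inE /= => /andP [/andP [Ht _] w0].
  by rewrite merge_shift // -ltnS.
Qed.

Lemma nvalues_full M (t : filling la M) :
  (nvalues t == M) = [forall v : 'I_M.+1, (0 < v) ==> occurs t v].
Proof.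
have sub : [set v : 'I_M.+1 | (0 < v) && occurs t v] \subset [set v : 'I_M.+1 | 0 < v].
  by apply/subsetP => v; rewrite !inE => /andP [].
rewrite /nvalues -[X in _ == X](card_pos_ord M) (subset_leqif_cards sub).2.
apply/eqP/forallP => [/setP eq_sets v | Hocc].
  by apply/implyP => v0; have := eq_sets v; rewrite !inE v0 /= => ->.
by apply/setP => v; rewrite !inE; case: (boolP (0 < v)) (implyP (Hocc v)) => // _ ->.
Qed.

Lemma count_nvalues_packed r : count_nvalues r r = count_packed r.
Proof. by apply: eq_card => t; rewrite !inE nvalues_full. Qed.

Lemma count_nvaluesE M r : r <= M -> count_nvalues M r = 'C(M, r) * count_packed r.
Proof.
move=> rM; rewrite -(subnK rM); elim: (M - r) => [|k IH].
  by rewrite add0n binn mul1n count_nvalues_packed.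
have := count_nvalues_succ (k + r) r; rewrite IH -addSn.
have bin_rec : (k + r).+1 * 'C(k + r, r) = ((k + r).+1 - r) * 'C((k + r).+1, r).
  by rewrite -mul_bin_down.
rewrite mulnA bin_rec -mulnA => /eqP; rewrite eqn_pmul2l; last lia.
by move/eqP.
Qed.

Lemma SSYT_count_nvalues M : SSYT M la = \sum_(r < M.+1) count_nvalues M r.
Proof. by apply: card_fibers => t _; rewrite ltnS nvalues_le. Qed.

Lemma card_leftmost r (t : filling la r) : packed t ->
  #|[set c | in_diagram c && ~~ not_leftmost t c]| = r.
Proof.
move=> Ht; have t_ssyt := packed_ssyt Ht.
rewrite -[RHS]card_pos_ord -(@card_in_imset _ _ t); last first.
  move=> a b; rewrite !inE => /andP [ia na] /andP [ib nb] e.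
  have e' : ent t a = ent t b by rewrite /ent e.
  apply: (same_ent_col_inj t_ssyt e'); first by rewrite -lt0n (ent_gt0 t_ssyt ia).
  apply/eqP; rewrite eqn_leq; apply/andP; split; rewrite leqNgt.
    by apply: contra na => lt; apply/existsP; exists b; rewrite e' eqxx lt.
  by apply: contra nb => lt; apply/existsP; exists a; rewrite e' eqxx lt.
apply: eq_card => v; rewrite inE; apply/imsetP/idP => [[c] | v0].
  by rewrite inE => /andP [ic _] ->; apply: (ent_gt0 t_ssyt ic).
have occ : occurs t v by apply: packed_occurs => //; rewrite -ltnS.
case/existsP: (occ) => c1 _; have [el Hl] := leftmostP c1 occ.
exists (leftmost t c1 v); last by apply/val_inj.
rewrite inE (in_diagram_ent t_ssyt) /=; last by rewrite el -lt0n.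
by apply/existsP => -[y /andP [/eqP ey]]; rewrite ltnNge Hl // ey el.
Qed.

Lemma card_not_leftmost r (t : filling la r) : packed t ->
  #|[set c | in_diagram c && not_leftmost t c]| = sumn la - r.
Proof.
move=> Ht; have := cardsID [set c | not_leftmost t c] [set c | in_diagram c].
have -> : [set c | in_diagram c] :&: [set c | not_leftmost t c] =
    [set c | in_diagram c && not_leftmost t c] by apply/setP => c; rewrite !inE.
have -> : [set c | in_diagram c] :\: [set c | not_leftmost t c] =
    [set c | in_diagram c && ~~ not_leftmost t c] by apply/setP => c; rewrite !inE andbC.
by rewrite card_diagram card_leftmost //; lia.
Qed.

Hypothesis la_ne : la != [::].

(* A pair (T, non-descent i) becomes (merge of i and i+1 in T, leftmost cell of i+1 in T);
   splitting at that cell recovers T. *)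
Lemma count_packed_nondesc_succ r d :
  d.+1 * count_packed_nondesc r.+1 d.+1 = (sumn la - r) * count_packed_nondesc r d.
Proof.
have [c0 _] := exists_in_diagram la_ne; rewrite /count_packed_nondesc.
rewrite -(@card_pairs_const _ _ (fun T : filling la r.+1 => packed T && (nondescents T == d.+1))
           (fun T (i : 'I_r.+1) => (0 < i) && ~~ descent T i)); last first.
  by move=> T /andP [_ /eqP <-].
rewrite -(@card_pairs_const _ _ (fun t : filling la r => packed t && (nondescents t == d))
           (fun t x => in_diagram x && not_leftmost t x)); last first.
  by move=> t /andP [Ht _]; apply: card_not_leftmost.
apply: (@card_in_bij _ _ _ _
  (fun p : filling la r.+1 * 'I_r.+1 => (merge_tab p.1 p.2, leftmost p.1 c0 (p.2 : nat).+1))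
  (fun p : filling la r * cell => (split_tab p.1 p.2, p.1 p.2))).
- move=> [T i]; rewrite !inE /= => /andP [/andP [HT /eqP nT] /andP [i0 Hnd]].
  have ir : (i : nat) <= r by rewrite -ltnS.
  have Ht : packed (merge_tab T i) by apply: merge_packed.
  have Hx : in_diagram (leftmost T c0 i.+1) by apply: leftmost_in_diagram.
  have Hnl : not_leftmost (merge_tab T i) (leftmost T c0 i.+1) by apply: leftmost_not_leftmost.
  have := nondescents_split Ht Hx Hnl; rewrite split_merge // nT => -[<-].
  by rewrite Ht Hx Hnl eqxx.
- move=> [t x]; rewrite !inE /= => /andP [/andP [Ht /eqP nt] /andP [Hx Hnl]].
  have v_gt0 := ent_gt0 (packed_ssyt Ht) Hx.
  by rewrite split_packed // nondescents_split // nt eqxx v_gt0 split_nondescent.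
- move=> [T i]; rewrite !inE /= => /andP [/andP [HT _] /andP [i0 Hnd]].
  have ir : (i : nat) <= r by rewrite -ltnS.
  by rewrite split_merge //; congr pair; apply/val_inj; apply: ent_merge_leftmost.
- move=> [t x]; rewrite !inE /= => /andP [/andP [Ht _] /andP [Hx Hnl]].
  by rewrite merge_split leftmost_split.
Qed.


Lemma val_ent M (t : filling la M) c : val (t c) = ent t c.
Proof. by []. Qed.

Lemma nondescents_eq0 r (t : filling la r) :
  (nondescents t == 0) = [forall u : 'I_r, (0 < u) ==> descent t u].
Proof.
rewrite /nondescents cards_eq0; apply/eqP/forallP => [nd0 u | Hd].
  apply/implyP => u0; apply: contraT => nd.
  by have := in_set0 u; rewrite -nd0 inE u0 nd.
by apply/setP => u; rewrite !inE; case: (0 < u) (Hd u) => //= ->.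
Qed.

Lemma qyt_descent M (t : filling la M) u : is_qyt t -> 0 < u -> occurs t u.+1 -> descent t u.
Proof.
case/andP => _ /forallP Hq u0 /existsP [c /eqP ec].
have := Hq c; rewrite val_ent ec ltnS u0 /=.
case/existsP => c1 /existsP [c2 /and3P [e1 e2 lt]].
by apply/existsP; exists c2; apply/existsP; exists c1; rewrite -!val_ent e2 e1 lt.
Qed.

Lemma qyt_occurs_below r (t : filling la r) w : is_qyt t -> occurs t r -> 0 < w <= r -> occurs t w.
Proof.
move=> Hq occ_r /andP [w0 wr].
have down u : 0 < u -> occurs t u.+1 -> occurs t u.
  move=> u0 /(qyt_descent Hq u0) /existsP [a /existsP [b /and3P [/eqP ea _ _]]].
  by apply/existsP; exists a; rewrite ea.
have occ_sub k : k < r -> occurs t (r - k).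
  elim: k => [|k IH] kr; first by rewrite subn0.
  by apply: down; [lia | rewrite (_ : (r - k.+1).+1 = r - k); [apply: IH | ]; lia].
by rewrite -(subKn wr); apply: occ_sub; lia.
Qed.

Lemma qyt_of_packed r (t : filling la r) : packed t -> nondescents t = 0 -> is_qyt t.
Proof.
move=> Ht /eqP; rewrite nondescents_eq0 => /forallP Hd.
apply/andP; split; first exact: packed_ssyt.
apply/forallP => c; apply/implyP; rewrite val_ent => c2.
have lt_r : (ent t c).-1 < r by have := ent_le t c; lia.
have := Hd (Ordinal lt_r); rewrite /= (_ : 0 < _); last lia.
case/existsP => a /existsP [b /and3P [/eqP ea /eqP eb lt]] /=.
apply/existsP; exists b; apply/existsP; exists a.
by rewrite !val_ent ea eb prednK ?eqxx ?lt //; lia.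
Qed.

Lemma packed_of_qyt r (t : filling la r) :
  is_qyt t -> occurs t r -> packed t && (nondescents t == 0).
Proof.
move=> Hq occ_r; have Ht : is_ssyt t by case/andP: Hq.
have occ w : 0 < w <= r -> occurs t w by apply: qyt_occurs_below.
apply/andP; split.
  apply/andP; split => //; apply/forallP => v; apply/implyP => v0.
  by apply: occ; rewrite v0 -ltnS ltn_ord.
rewrite nondescents_eq0; apply/forallP => u; apply/implyP => u0.
by apply: qyt_descent => //; apply: occ; rewrite ltn_ord.
Qed.

Local Notation n := (sumn la).

Lemma no_ssyt0 (t : filling la 0) : ~~ is_ssyt t.
Proof.
apply/negP => Ht; have [c ic] := exists_in_diagram la_ne.
by have := ent_gt0 Ht ic; have := ent_le t c; lia.
Qed.

Lemma QYT_eq0 : QYT_eq 0 la = 0.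
Proof.
apply/eqP; rewrite cards_eq0; apply/eqP/setP => t.
by rewrite !inE /is_qyt (negbTE (no_ssyt0 t)).
Qed.

Lemma count_packed_nondesc0 r : count_packed_nondesc r 0 = QYT_eq r la.
Proof.
apply: eq_card => t; rewrite !inE; apply/idP/idP => [/andP [Ht /eqP nd0] | /andP [Hq occ_r]].
  rewrite qyt_of_packed //=; case: r t Ht {nd0} => [|r] t Ht.
    by have := no_ssyt0 t; rewrite packed_ssyt.
  exact: packed_occurs.
exact: packed_of_qyt.
Qed.

Lemma count_packed_nondescE d r : d <= r -> r <= n ->
  count_packed_nondesc r d = 'C(n - r + d, d) * QYT_eq (r - d) la.
Proof.
elim: d r => [|d IH] r dr rn; first by rewrite bin0 mul1n subn0 count_packed_nondesc0.
case: r dr rn => [|r] // dr rn.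
have := count_packed_nondesc_succ r d; rewrite IH; try lia.
rewrite (_ : n - r.+1 + d.+1 = n - r + d) ?subSS; last lia.
have bin_rec : (n - r) * 'C(n - r + d, d) = d.+1 * 'C(n - r + d, d.+1).
  by rewrite mul_bin_left; congr (_ * _); lia.
by rewrite mulnA bin_rec -mulnA => /eqP; rewrite eqn_pmul2l // => /eqP.
Qed.

Lemma count_packedE r : r <= n ->
  count_packed r = \sum_(j < n.+1) 'C(n - j, n - r) * QYT_eq j la.
Proof.
move=> rn; rewrite /count_packed (@card_fibers _ _ (@nondescents r) r.+1) => [|t _]; last first.
  by rewrite ltnS /nondescents; apply: leq_trans (max_card _) _; rewrite card_ord.
rewrite (eq_bigr (fun d : 'I_r.+1 => 'C(n - r + d, d) * QYT_eq (r - d) la)) => [|d _]; last first.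
  by apply: count_packed_nondescE; rewrite // -ltnS.
rewrite (@sum_ord_zero_tail (fun j => 'C(n - j, n - r) * QYT_eq j la) r.+1 n.+1) //; last first.
  by move=> j /andP [j1 j2]; rewrite bin_small ?mul0n //; lia.
rewrite -(big_mkord xpredT (fun j => 'C(n - j, n - r) * QYT_eq j la)) big_rev_mkord subn0.
apply: eq_bigr => d _; have dr := ltn_ord d.
rewrite subSS (_ : n - (r - d) = n - r + d); last lia.
by rewrite -(bin_sub (leq_addl (n - r) d)) addnK.
Qed.

Lemma SSYT_QYT M : M <= n -> SSYT M la = \sum_(j < n.+1) 'C(M + (n - j), n) * QYT_eq j la.
Proof.
move=> Mn.
rewrite SSYT_count_nvalues.
rewrite (eq_bigr (fun r : 'I_M.+1 => 'C(M, r) * count_packed r)) => [|r _]; last first.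
  by apply: count_nvaluesE; rewrite -ltnS.
rewrite -(@sum_ord_zero_tail (fun r => 'C(M, r) * count_packed r) M.+1 n.+1) //; last first.
  by move=> j /andP [j1 _]; rewrite bin_small ?mul0n.
have packedE (r : 'I_n.+1) :
    'C(M, r) * count_packed r = \sum_(j < n.+1) 'C(M, r) * ('C(n - j, n - r) * QYT_eq j la).
  by rewrite count_packedE ?big_distrr // -ltnS.
rewrite (eq_bigr _ (fun (r : 'I_n.+1) _ => packedE r)) exchange_big /=; apply: eq_bigr => j _.
under eq_bigr do rewrite mulnA.
by rewrite -big_distrl binomial.Vandermonde.
Qed.

End Tableaux.

Import GRing.Theory.
Local Open Scope ring_scope.

Section BinomialInversion.
Variable n : nat.
Hypothesis n_gt0 : (0 < n)%N.

Definition alt_binom_conv (a s L : nat) : int :=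
  \sum_(i < L) (-1) ^+ i * ('C(a, i))%:Z * ('C(n + s - i, n))%:Z.

Lemma alt_binom_convS a s L :
  alt_binom_conv a.+1 s L.+1 =
  alt_binom_conv a s L.+1 - (if s is s'.+1 then alt_binom_conv a s' L else 0).
Proof.
rewrite /alt_binom_conv !big_ord_recl /= !bin0.
have split_term (i : 'I_L) :
    (-1) ^+ (bump 0 i) * ('C(a.+1, bump 0 i))%:Z * ('C(n + s - bump 0 i, n))%:Z =
    (-1) ^+ (bump 0 i) * ('C(a, bump 0 i))%:Z * ('C(n + s - bump 0 i, n))%:Z
    - (-1) ^+ i * ('C(a, i))%:Z * ('C(n + s - i.+1, n))%:Z.
  by rewrite /bump /= add1n binS PoszD exprS mulrDr mulrDl mulN1r !mulNr.
rewrite (eq_bigr _ (fun i _ => split_term i)) sumrB addrA; congr (_ - _).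
case: s {split_term} => [|s].
  by apply: big1 => i _; rewrite (@bin_small (n + 0 - i.+1) n) ?mulr0 //; lia.
by apply: eq_bigr => i _; rewrite (_ : (n + s.+1 - i.+1 = n + s - i)%N) //; lia.
Qed.

Lemma alt_binom_convE a s L : (a <= n.+1)%N -> (s < L)%N ->
  alt_binom_conv a s L = if a == n.+1 then (s == 0%N)%:Z else ('C(n - a + s, s))%:Z.
Proof.
elim: a s L => [|a IH] s L an sL.
  case: L sL => // L _.
  rewrite /alt_binom_conv big_ord_recl big1 => [|i _]; last by rewrite bin0n mulr0 mul0r.
  by rewrite expr0 mul1r bin0 mul1r addr0 !subn0 -(bin_sub (leq_addl n s)) addnK.
case: L sL => // L sL.
rewrite alt_binom_convS IH 1?(_ : (a == n.+1) = false) //; try lia.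
case: s sL => [|s] sL; first by rewrite !bin0 subr0; case: (a.+1 == n.+1).
rewrite IH 1?(_ : (a == n.+1) = false) //; try lia.
case: (eqVneq a n) => [-> | ne]; first by rewrite eqxx subnn !add0n !binn subrr.
rewrite (_ : (a.+1 == n.+1) = false); last lia.
rewrite (_ : (n - a + s.+1 = (n - a.+1 + s.+1).+1)%N); last lia.
by rewrite (_ : (n - a + s = n - a.+1 + s.+1)%N) 1?binS 1?PoszD ?addrK //; lia.
Qed.

Lemma inversion_coef k j : (k < n)%N -> (0 < j <= n)%N ->
  \sum_(m < k.+1) (-1) ^+ (k - m) * ('C(n.+1, k - m))%:Z * ('C(m.+1 + (n - j), n))%:Z =
  (j == k.+1)%:Z.
Proof.
move=> kn /andP [j0 jn].
case: (ltnP k.+1 j) => hj.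
  rewrite (_ : j == k.+1 = false); last lia.
  apply: big1 => m _; rewrite (@bin_small (m.+1 + (n - j)) n) ?mulr0 //.
  by have := ltn_ord m; lia.
have sL : (k.+1 - j < k.+1)%N by lia.
rewrite (_ : j == k.+1 = (k.+1 - j == 0)%N); last lia.
have := alt_binom_convE (leqnn n.+1) sL; rewrite eqxx => <-.
rewrite /alt_binom_conv (reindex_inj rev_ord_inj) /=; apply: eq_bigr => i _.
have ik := ltn_ord i.
rewrite (_ : (k - (k.+1 - i.+1) = i)%N); last lia.
by rewrite (_ : ((k.+1 - i.+1).+1 + (n - j) = n + (k.+1 - j) - i)%N); last lia.
Qed.

End BinomialInversion.

Lemma binomial_inversion (S Q : nat -> nat) n k : (k < n)%N -> Q 0%N = 0%N ->
  (forall M, (M <= n)%N -> S M = \sum_(j < n.+1) 'C(M + (n - j), n) * Q j)%N ->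
  (Q k.+1)%:Z = \sum_(m < k.+1) (-1) ^+ (k - m) * ('C(n.+1, k - m))%:Z * (S m.+1)%:Z.
Proof.
move=> kn Q0 SE.
have n_gt0 : (0 < n)%N by lia.
under eq_bigr => m _.
  rewrite SE; last by have := ltn_ord m; lia.
  rewrite (big_morph Posz PoszD (erefl 0)) mulr_sumr.
  under eq_bigr => j _ do rewrite PoszM mulrA.
over.
rewrite exchange_big /=; under eq_bigr => j _ do rewrite -mulr_suml.
have kn1 : (k.+1 < n.+1)%N by lia.
rewrite (bigD1 (Ordinal kn1)) //= inversion_coef // ?eqxx ?mul1r ?big1 ?addr0 //.
move=> j nj; case: (posnP j) => [-> | j0]; first by rewrite Q0 mulr0.
rewrite inversion_coef 1?(_ : (j == k.+1 :> nat) = false) ?mul0r //.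
  by apply: contraNF nj => /eqP e; apply/eqP/val_inj.
by rewrite j0 -ltnS ltn_ord.
Qed.

Theorem mainTheorem4 (la : seq nat) (n k : nat) :
  is_partition la -> sumn la = n -> (k < n)%N ->
  (QYT_eq k.+1 la)%:Z =
  \sum_(m < k.+1) (-1) ^+ (k - m) * ('C(n.+1, k - m))%:Z * (SSYT m.+1 la)%:Z.
Proof.
move=> Hla <- kn.
have la_ne : la != [::] by apply: contraTneq kn => ->.
apply: (binomial_inversion (S := SSYT ^~ la) (Q := QYT_eq ^~ la)) => //.
  exact: QYT_eq0.
by move=> M; apply: SSYT_QYT.
Qed.
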